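(* Let $k\in\mathbb{N}$, $C\ge0$, $z_1,\dots,z_k\ge1$, $\lambda_1,\dots,\lambda_k>0$ and $\mu_1,\dots,\mu_k>0$ with $Z=\mu_1z_1+\cdots+\mu_kz_k\ge\Lambda$. (a) If $\lambda_i<\mu_i$ for all $i$, then $$\sum_{\mathbf{r}\in\mathscr{H}^k_+(Z)}\left(1+\sum_{i=1}^k\lambda_ir_i-Z\right)^C\prod_{i=1}^k\frac{e^{-z_i}z_i^{r_i}}{r_i!}\ll_{k,\boldsymbol{\lambda},\boldsymbol{\mu},C}\mathrm{Prob}(\mathscr{H}^k(Z)).$$ (b) If $\log(\mu_i/\lambda_i)<\lambda_i$ for all $i$, then $$\sum_{\mathbf{r}\in\mathscr{H}^k_-(Z)}\left(1+Z-\sum_{i=1}^k\lambda_ir_i\right)^C\prod_{i=1}^k\frac{e^{-z_i}(e^{\lambda_i}z_i)^{r_i}}{r_i!}\ll_{k,\boldsymbol{\lambda},\boldsymbol{\mu},C}e^Z\,\mathrm{Prob}(\mathscr{H}^k(Z)).$$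
   Context: $\Lambda=\max_i\lambda_i$. $\mathrm{Prob}$ denotes the $k$-dimensional Poisson distribution with parameters $z_1,\dots,z_k$, giving $(r_1,\dots,r_k)\in(\mathbb{N}\cup\{0\})^k$ probability $\prod_ie^{-z_i}z_i^{r_i}/r_i!$. For $R\ge\Lambda$: $\mathscr{H}^k(R)=\{\mathbf{r}\in(\mathbb{N}\cup\{0\})^k: R-\Lambda<\sum_i\lambda_ir_i\le R\}$, $\mathscr{H}^k_-(R)=\{\mathbf{r}\in(\mathbb{N}\cup\{0\})^k:\sum_i\lambda_ir_i\le R\}$, $\mathscr{H}^k_+(R)=\{\mathbf{r}\in(\mathbb{N}\cup\{0\})^k:\sum_i\lambda_ir_i\ge R\}$. *)

From HB Require Import structures.
From mathcomp Require Import all_boot all_order all_algebra.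
From mathcomp Require Import all_classical all_reals all_analysis.
Set Implicit Arguments. Unset Strict Implicit. Unset Printing Implicit Defensive.
Import Order.TTheory GRing.Theory Num.Theory.
Local Open Scope classical_set_scope.
Local Open Scope ring_scope.

Section Defs.
Variables (R : realType) (k : nat).

Definition midx := {ffun 'I_k -> nat}.

Definition Lam (lam : 'I_k -> R) : R := \big[Num.max/0]_(i < k) lam i.

Definition lsum (lam : 'I_k -> R) (r : midx) : R := \sum_(i < k) lam i * (r i)%:R.

Definition Zval (mu z : 'I_k -> R) : R := \sum_(i < k) mu i * z i.

Definition Hset (lam : 'I_k -> R) (X : R) : set midx :=
  [set r | X - Lam lam < lsum lam r /\ lsum lam r <= X].
Definition Hminus (lam : 'I_k -> R) (X : R) : set midx :=
  [set r | lsum lam r <= X].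
Definition Hplus (lam : 'I_k -> R) (X : R) : set midx :=
  [set r | X <= lsum lam r].

Definition poiw (z : 'I_k -> R) (r : midx) : R :=
  \prod_(i < k) (expR (- z i) * z i ^+ r i / (r i)`!%:R).

Definition Prob (z : 'I_k -> R) (S : set midx) : \bar R :=
  esum S (fun r => (poiw z r)%:E).

End Defs.

(* Both bounds are proved by transport to the shell H(Z).  A multi-index r outside the
   shell is moved into it one unit step at a time: in (a) by lowering a coordinate with
   lambda_i r_i > mu_i z_i, in (b) by raising one with lambda_i r_i < mu_i z_i.  Since the
   Poisson weight satisfies p(r + e_i) (r_i + 1) = p(r) z_i, each step gains a factor
   theta_i < 1 on the tilted weight exp(g (lambda.r - Z)) p(r), so the weight at r is at most
   prod_i theta_i^|r_i - s_i| times the weight at the endpoint s.  The polynomial factor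
   (1 + |lambda.r - Z|)^C is absorbed by the tilt, and the kernel prod_i theta_i^|r_i - s_i|
   has total mass at most prod_i 2 / (1 - theta_i) in r, which gives the constant. *)

From HB Require Import structures.
From mathcomp Require Import all_boot all_order all_algebra finmap.
From mathcomp Require Import all_classical all_reals all_analysis.
From mathcomp Require Import ring lra.
Import Order.TTheory GRing.Theory Num.Theory.
Set Implicit Arguments. Unset Strict Implicit. Unset Printing Implicit Defensive.
Local Open Scope classical_set_scope.
Local Open Scope ring_scope.

Lemma exists_lt_of_sum_lt (R : realDomainType) (I : finType) (a b : I -> R) :
  \sum_i a i < \sum_i b i -> exists i, a i < b i.
Proof.
move=> lt_ab; apply: contrapT => /forallNP nlt.
have : \sum_i b i <= \sum_i a i by apply: ler_sum => i _; rewrite leNgt; apply/negP.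
by rewrite leNgt lt_ab.
Qed.

Lemma exists_small_pos (R : realFieldType) (I : finType) (a b : I -> R) :
  (forall i, 0 < b i) -> exists d, [/\ 0 < d, d <= 1 & forall i, d * a i < b i].
Proof.
move=> b0; pose S := \sum_j `|a j| / b j.
have S0 : 0 <= S by apply: sumr_ge0 => j _; rewrite divr_ge0 // ltW.
exists (1 + S)^-1; split; [by rewrite invr_gt0; lra | by rewrite invf_le1; lra |].
move=> i; rewrite mulrC ltr_pdivrMr; last by lra.
have : `|a i| / b i <= S.
  by rewrite /S (bigD1 i) //= lerDl sumr_ge0 // => j _; rewrite divr_ge0 // ltW.
rewrite ler_pdivrMr // => le_ai; have := ler_norm (a i); have := b0 i; nra.
Qed.

Lemma powR_le_expR (R : realType) (C d : R) : 0 <= C -> 0 < d ->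
  exists2 K, 0 < K & forall x, 0 <= x -> (1 + x) `^ C <= K * expR (d * x).
Proof.
move=> C0 d0; pose e := Num.min d 1 / (C + 1).
have m0 : 0 < Num.min d 1 by rewrite lt_min d0 ltr01.
have [m_d m1] : Num.min d 1 <= d /\ Num.min d 1 <= 1 by rewrite !ge_min !lexx orbT.
have e0 : 0 < e by rewrite divr_gt0 //; lra.
have e1 : e <= 1 by rewrite ler_pdivrMr; lra.
have Ce : C * e <= d by rewrite mulrA ler_pdivrMr; nra.
exists (expR (- (C * ln e))) => [|x x0]; first exact: expR_gt0.
have ln_le : ln (1 + x) <= e * x - ln e.
  have ex0 : 0 < e * (1 + x) by rewrite mulr_gt0 //; lra.
  have := le_ln1Dx (_ : -1 < e * (1 + x) - 1); rewrite addrCA subrr addr0.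
  by rewrite lnM ?posrE //; [nra | lra].
rewrite /powR gt_eqF; last by lra.
rewrite -expRD ler_expR; nra.
Qed.

Section MultiIndex.
Variables (R : realType) (k : nat).
Implicit Types (r : midx k).

Definition upd r (i : 'I_k) (n : nat) : midx k :=
  [ffun j => if j == i then n else r j].

Lemma upd_id r i : upd r i (r i) = r.
Proof. by apply/ffunP => j; rewrite ffunE; case: eqP => [->|]. Qed.

Lemma big_upd (idx : R) (op : Monoid.com_law idx) (F : 'I_k -> nat -> R) r i n :
  \big[op/idx]_j F j (upd r i n j) = op (F i n) (\big[op/idx]_(j | j != i) F j (r j)).
Proof.
rewrite (bigD1 i) //= ffunE eqxx; congr (op _ _).
by apply: eq_bigr => j /negbTE ne; rewrite ffunE ne.
Qed.
End MultiIndex.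

Section Poisson.
Variables (R : realType) (k : nat).
Implicit Types (r : midx k) (lam z : 'I_k -> R).

Lemma lsum_updS lam r i n : lsum lam (upd r i n.+1) = lsum lam (upd r i n) + lam i.
Proof.
rewrite /lsum !(big_upd +%R (fun j m => lam j * m%:R)) /=.
by rewrite -natr1 mulrDr mulr1 addrAC.
Qed.

Lemma poiw_updS z r i n :
  poiw z (upd r i n.+1) * n.+1%:R = poiw z (upd r i n) * z i.
Proof.
rewrite /poiw !(big_upd ( *%R)
  (fun j m => expR (- z j) * z j ^+ m / m`!%:R)) /=.
have nf : n`!%:R != 0 :> R by rewrite pnatr_eq0 -lt0n fact_gt0.
have nS : n.+1%:R != 0 :> R by rewrite pnatr_eq0.
rewrite factS natrM exprS; field; exact/andP.
Qed.

Lemma lam_le_Lam lam i : lam i <= Lam lam.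
Proof. exact: le_bigmax. Qed.

Lemma poiw_ge0 z r : (forall i, 0 <= z i) -> 0 <= poiw z r.
Proof.
move=> z0; apply: prodr_ge0 => i _.
by rewrite !mulr_ge0 ?invr_ge0 ?exprn_ge0 ?expR_ge0.
Qed.

Lemma prod_expR_poiw lam z r :
  \prod_(i < k) (expR (- z i) * (expR (lam i) * z i) ^+ r i / (r i)`!%:R)
  = expR (lsum lam r) * poiw z r.
Proof.
rewrite /lsum expR_sum /poiw -big_split /=; apply: eq_bigr => i _.
by rewrite (mulrC (lam i)) expRM_natl exprMn; ring.
Qed.
End Poisson.

Section GeomKernel.
Variables (R : realType) (k : nat).

Lemma sum_expr_le_inv (t : R) (M : nat) : 0 <= t < 1 ->
  \sum_(i < M) t ^+ i <= (1 - t)^-1.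
Proof.
case/andP=> t0 t1; rewrite -[leRHS]mulr1 ler_pdivlMl ?subr_gt0 //.
have := subrX1 t M; have := exprn_ge0 M t0; nra.
Qed.

Lemma sum_expr_distn_le (t : R) (s N : nat) : 0 <= t < 1 ->
  \sum_(n < N) t ^+ `|n - s| <= 2 / (1 - t).
Proof.
move=> t01; have t0 : 0 <= t by case/andP: t01.
apply: (@le_trans _ _ (\sum_(0 <= n < s + N) t ^+ `|n - s|)).
  rewrite -(big_mkord xpredT (fun n => t ^+ `|n - s|)).
  rewrite (big_cat_nat (leq0n N) (leq_addl s N)) /= lerDl.
  by apply: sumr_ge0 => n _; apply: exprn_ge0.
rewrite (big_cat_nat (leq0n s) (leq_addr N s)) /= mulr2n mulrDl mul1r.
apply: lerD.
  rewrite big_nat_rev /= add0n.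
  apply: (@le_trans _ _ (\sum_(0 <= n < s) t ^+ n)); last first.
    by rewrite big_mkord sum_expr_le_inv.
  apply: ler_sum_nat => n /= ns.
  rewrite distnEr ?leq_subr // subKn // exprS ler_piMl ?exprn_ge0 //.
  by case/andP: t01 => _ /ltW.
rewrite -{1}[s]add0n big_addn addKn big_mkord.
rewrite (eq_bigr (fun n : 'I_N => t ^+ n)) ?sum_expr_le_inv // => n _.
by rewrite distnEl ?leq_addl // addnK.
Qed.

Lemma sum_prod_coord_le (G : 'I_k -> nat -> R) (c : 'I_k -> R) (l : seq (midx k)) :
  (forall i n, 0 <= G i n) -> (forall i N, \sum_(n < N) G i n <= c i) -> uniq l ->
  \sum_(r <- l) \prod_i G i (r i) <= \prod_i c i.
Proof.
move=> G0 Gc ul.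
set M := (\max_(r <- l) \max_i r i)%N.
have leM r : r \in l -> forall i, (r i <= M)%N.
  move=> rl i; apply: (leq_trans (@leq_bigmax _ (fun i => r i) i)).
  exact: (@leq_bigmax_seq _ l xpredT (fun r : midx k => (\max_i r i)%N) r rl).
pose cut (r : midx k) : {ffun 'I_k -> 'I_M.+1} := [ffun i => inord (r i)].
have cutE r : r \in l -> forall i, cut r i = r i :> nat.
  by move=> rl i; rewrite ffunE inordK // ltnS leM.
have -> : \sum_(r <- l) \prod_i G i (r i) = \sum_(f <- map cut l) \prod_i G i (f i).
  rewrite big_map big_seq [RHS]big_seq; apply: eq_bigr => r rl.
  by apply: eq_bigr => i _; rewrite cutE.
rewrite big_uniq; last first.
  rewrite map_inj_in_uniq // => r1 r2 h1 h2 e; apply/ffunP => i.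
  by rewrite -(cutE r1 h1) -(cutE r2 h2) e.
apply: (@le_trans _ _ (\sum_(f : {ffun 'I_k -> 'I_M.+1}) \prod_i G i (f i))).
  rewrite [leRHS](bigID (fun f => f \in map cut l)) /= lerDl.
  by apply: sumr_ge0 => f _; apply: prodr_ge0 => i _.
rewrite -(bigA_distr_bigA (fun i (j : 'I_M.+1) => G i j)) /=.
by apply: ler_prod => i _; rewrite Gc sumr_ge0.
Qed.

Definition geom_kernel (th : 'I_k -> R) (s r : midx k) : R :=
  \prod_i th i ^+ `|r i - s i|.

Variable th : 'I_k -> R.
Implicit Types (s r : midx k) (l : seq (midx k)) (n : nat).
Hypothesis th01 : forall i, 0 <= th i < 1.

Lemma geom_kernel_ge0 s r : 0 <= geom_kernel th s r.
Proof. by apply: prodr_ge0 => i _; rewrite exprn_ge0 //; case/andP: (th01 i). Qed.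

Lemma geom_kernel_refl r : geom_kernel th r r = 1.
Proof. by rewrite /geom_kernel big1 // => i _; rewrite distnn. Qed.

Lemma geom_kernel_upd s r i n : (`|r i - n| <= 1)%N ->
  th i * geom_kernel th s (upd r i n) <= geom_kernel th s r.
Proof.
move=> rn; have /andP[th0 /ltW th1] := th01 i.
rewrite /geom_kernel -{2}(upd_id r i) !(big_upd ( *%R) (fun j m => th j ^+ `|m - s j|)) /=.
rewrite mulrA -exprS ler_wpM2r ?ler_wiXn2l //.
  by apply: prodr_ge0 => j _; rewrite exprn_ge0 //; case/andP: (th01 j).
by rewrite -add1n (leq_trans (leqD_dist _ n _)) ?leq_add2r.
Qed.

Lemma geom_kernel_mass s l : uniq l ->
  \sum_(r <- l) geom_kernel th s r <= \prod_i (2 / (1 - th i)).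
Proof.
apply: (sum_prod_coord_le (G := fun i n => th i ^+ `|n - s i|)) => [i n|i N].
  by rewrite exprn_ge0 //; case/andP: (th01 i).
exact: sum_expr_distn_le.
Qed.

Lemma walk_to_target (P H : set (midx k)) (w mes : midx k -> R) (ell : R) :
  0 < ell -> (forall r, 0 <= w r) -> (forall r, P r -> 0 <= mes r) ->
  (forall r, P r -> ~ H r -> exists i n, [/\ (`|r i - n| <= 1)%N, P (upd r i n),
     mes (upd r i n) <= mes r - ell & w r <= th i * w (upd r i n)]) ->
  forall r, P r -> exists2 s, H s & w r <= geom_kernel th s r * w s.
Proof.
move=> ell0 w0 mes0 step.
suff walk N r : P r -> mes r < N%:R * ell ->
    exists2 s, H s & w r <= geom_kernel th s r * w s.
  by move=> r Pr; apply: (walk (Num.truncn (mes r / ell)).+1) => //;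
    rewrite -ltr_pdivrMr // truncnS_gt.
elim: N r => [|N IH] r Pr mes_lt.
  by have := mes0 r Pr; rewrite mul0r in mes_lt; lra.
have [Hr | nHr] := pselect (H r).
  by exists r => //; rewrite geom_kernel_refl mul1r.
have [i [n [rn Pr' mes_step w_step]]] := step r Pr nHr.
have [|s Hs ws] := IH _ Pr'; first by move: mes_lt; rewrite -natr1 mulrDl mul1r; lra.
exists s => //; have /andP[th0 _] := th01 i.
apply: (le_trans w_step); apply: le_trans (ler_wpM2l th0 ws) _.
by rewrite mulrA ler_wpM2r // geom_kernel_upd.
Qed.
End GeomKernel.

Section KernelTransport.
Variables (R : realType) (k : nat).
Local Open Scope ereal_scope.

Lemma esum_le_fin (S : set (midx k)) (h : midx k -> R) (B : R) :
  (forall r, (0 <= h r)%R) ->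
  (forall l : seq (midx k), uniq l -> (\sum_(r <- l) h r <= B)%R) ->
  esum S (fun r => (h r)%:E) <= B%:E.
Proof.
move=> h0 hB; apply: ge_ereal_sup => _ [X [finX XS] <-].
by rewrite fsbig_finite // sumEFin lee_fin hB // fset_uniq.
Qed.

Lemma esum_le_kernel (S H : set (midx k)) (f p : midx k -> R)
    (K : midx k -> midx k -> R) (c : R) :
  (forall r, (0 <= f r)%R) -> (forall s, (0 <= p s)%R) ->
  (forall s r, (0 <= K s r)%R) ->
  (forall s (l : seq (midx k)), uniq l -> (\sum_(r <- l) K s r <= c)%R) ->
  (forall r, S r -> exists2 s, H s & (f r <= K s r * p s)%R) ->
  esum S (fun r => (f r)%:E) <= c%:E * esum H (fun s => (p s)%:E).
Proof.
move=> f0 p0 K0 Kc dom.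
have c0 : (0 <= c)%R by have := Kc [ffun=> 0%N] [::] erefl; rewrite big_nil.
have Kp0 s r : 0 <= (K s r * p s)%:E by rewrite lee_fin mulr_ge0.
apply: (@le_trans _ _ (esum S (fun r => esum H (fun s => (K s r * p s)%:E)))).
  apply: le_esum => r Sr; have [s Hs le] := dom r Sr.
  apply: esum_ge; exists [set s]; first by split; [exact: finite_set1 | move=> x ->].
  by rewrite fsbig_set1 lee_fin.
rewrite esum_esum // (reindex_esum (H `*`` (fun _ => S)) _ (fun x => (x.2, x.1))); last first.
  split=> //= [[i j] [/=] //|[i1 i2] [j1 j2] /= _ _ [-> ->] //|[i1 i2] [Pi1 Qi2] /=].
  by exists (i2, i1).
rewrite -(esum_esum (I := H) (J := fun _ => S) (a := fun s r => (K s r * p s)%:E)) //.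
apply: (@le_trans _ _ (esum H (fun s => (c * p s)%:E))).
  apply: le_esum => s Hs; apply: esum_le_fin => [r|l ul]; first exact: mulr_ge0.
  by rewrite -big_distrl /= ler_wpM2r // Kc.
apply: ge_ereal_sup => _ [X [finX XH] <-].
rewrite fsbig_finite // sumEFin -mulr_sumr EFinM lee_wpmul2l ?lee_fin //.
by rewrite -sumEFin -fsbig_finite //; apply: ereal_sup_ubound; exists X.
Qed.

Lemma esum_le_geom_kernel (th : 'I_k -> R) (S H : set (midx k)) (f p : midx k -> R)
    (m : R) :
  (forall i, (0 <= th i < 1)%R) -> (0 <= m)%R ->
  (forall r, (0 <= f r)%R) -> (forall s, (0 <= p s)%R) ->
  (forall r, S r -> exists2 s, H s & (f r <= m * geom_kernel th s r * p s)%R) ->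
  esum S (fun r => (f r)%:E)
    <= (m * \prod_i (2 / (1 - th i)))%:E * esum H (fun s => (p s)%:E).
Proof.
move=> th01 m0 f0 p0 dom.
apply: (esum_le_kernel (K := fun s r => m * geom_kernel th s r)%R) => //.
- by move=> s r; rewrite mulr_ge0 // geom_kernel_ge0.
- by move=> s l ul; rewrite -mulr_sumr ler_wpM2l // geom_kernel_mass.
Qed.
End KernelTransport.

Section Tilted.
Variables (R : realType) (k : nat) (lam mu z : 'I_k -> R).
Implicit Types (r : midx k) (g : R).

Definition tilted g r := expR (g * (lsum lam r - Zval mu z)) * poiw z r.

Lemma tilted_ge0 g r : (forall i, 0 <= z i) -> 0 <= tilted g r.
Proof. by move=> z0; rewrite mulr_ge0 ?expR_ge0 ?poiw_ge0. Qed.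

Lemma tilted_updS g r i n :
  tilted g (upd r i n.+1) * n.+1%:R = expR (g * lam i) * tilted g (upd r i n) * z i.
Proof.
rewrite /tilted lsum_updS.
have -> : g * (lsum lam (upd r i n) + lam i - Zval mu z)
  = g * lam i + g * (lsum lam (upd r i n) - Zval mu z) by ring.
by rewrite expRD -!mulrA poiw_updS.
Qed.

Lemma tilted_le_poiw g r : (forall i, 0 <= z i) -> 0 <= g ->
  lsum lam r <= Zval mu z -> tilted g r <= poiw z r.
Proof.
move=> z0 g0 le_rZ; rewrite -[leRHS]mul1r ler_wpM2r ?poiw_ge0 // expR_le1.
by rewrite mulr_ge0_le0 // subr_le0.
Qed.
End Tilted.

Section Lowering.
Variables (R : realType) (k : nat) (lam mu z : 'I_k -> R) (delta ell : R).
Hypotheses (mu_gt0 : forall i, 0 < mu i) (z_gt0 : forall i, 0 < z i)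
  (ell_le : forall i, ell <= lam i).

Lemma lowering_step r :
  Zval mu z - Lam lam < lsum lam r -> ~ Hset lam (Zval mu z) r ->
  exists i (n : nat), [/\ (`|r i - n| <= 1)%N, Zval mu z - Lam lam < lsum lam (upd r i n),
    lsum lam (upd r i n) <= lsum lam r - ell &
    tilted lam mu z delta r
      <= expR (delta * lam i) * lam i / mu i * tilted lam mu z delta (upd r i n)].
Proof.
move=> ZL_r nHr; have Z_lt_r : Zval mu z < lsum lam r.
  by rewrite ltNge; apply/negP => le_rZ; apply: nHr.
have [i lt_i] := exists_lt_of_sum_lt Z_lt_r.
have ri_gt0 : (0 < r i)%N.
  by rewrite lt0n; apply: contraTneq lt_i => ->; rewrite mulr0 -leNgt mulr_ge0 ?ltW.
pose n := (r i).-1; have ri : r i = n.+1 by rewrite prednK.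
have upd_r : upd r i n.+1 = r by rewrite -ri upd_id.
have lsum_r := lsum_updS lam r i n; rewrite upd_r in lsum_r.
have tilted_r := tilted_updS lam mu z delta r i n; rewrite upd_r in tilted_r.
exists i, n; split.
- by rewrite ri distSn.
- by have := lam_le_Lam lam i; lra.
- by have := ell_le i; lra.
have n_gt0 : 0 < n.+1%:R :> R by rewrite ltr0n.
have z_le : z i <= lam i / mu i * n.+1%:R.
  by rewrite mulrAC ler_pdivlMr // mulrC -ri ltW.
rewrite -(ler_pM2r n_gt0) tilted_r.
rewrite (_ : _ * _ * n.+1%:R = expR (delta * lam i) * tilted lam mu z delta (upd r i n)
  * (lam i / mu i * n.+1%:R)); last by ring.
by rewrite ler_wpM2l // mulr_ge0 ?expR_ge0 // tilted_ge0 // => j; apply: ltW.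
Qed.
End Lowering.

Lemma esum_Hplus_le_Prob_Hset (R : realType) (k : nat) (lam mu : 'I_k -> R) (C : R) :
  (0 < k)%N -> 0 <= C -> (forall i, 0 < lam i) -> (forall i, 0 < mu i) ->
  (forall i, lam i < mu i) ->
  exists c : R, 0 < c /\
    forall z : 'I_k -> R, (forall i, 1 <= z i) -> Lam lam <= Zval mu z ->
      (esum (Hplus lam (Zval mu z))
         (fun r => ((1 + lsum lam r - Zval mu z) `^ C * poiw z r)%:E)
       <= c%:E * Prob z (Hset lam (Zval mu z)))%E.
Proof.
move=> k_gt0 C0 lam_gt0 mu_gt0 lam_lt_mu.
have ln_gt0 i : 0 < ln (mu i / lam i) by rewrite ln_gt0 // ltr_pdivlMr // mul1r.
have [delta [delta_gt0 _ delta_lt]] := exists_small_pos lam ln_gt0.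
have [ell [ell_gt0 _ ell_lt]] := exists_small_pos (fun _ => 1) lam_gt0.
have ell_le i : ell <= lam i by have := ell_lt i; rewrite mulr1 => /ltW.
pose th i := expR (delta * lam i) * lam i / mu i.
have th01 i : 0 <= th i < 1.
  rewrite divr_ge0 ?mulr_ge0 ?expR_ge0 ?ltW //= ltr_pdivrMr // mul1r -ltr_pdivlMr //.
  by rewrite -[ltRHS]lnK ?posrE ?divr_gt0 // ltr_expR.
have [K K_gt0 polyK] := powR_le_expR C0 delta_gt0.
exists (K * \prod_i (2 / (1 - th i))); split.
  rewrite mulr_gt0 // prodr_gt0 // => i _.
  by have /andP[_ th_lt1] := th01 i; rewrite divr_gt0 // subr_gt0.
move=> z z_ge1 Lam_le_Z; set Z := Zval mu z.
have z_gt0 i : 0 < z i by have := z_ge1 i; lra.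
have z_ge0 i : 0 <= z i by exact: ltW.
have Lam_gt0 : 0 < Lam lam by apply: lt_le_trans (lam_le_Lam lam (Ordinal k_gt0)).
apply: esum_le_geom_kernel (th01) (ltW K_gt0) _ _ _ => [r|s|r Z_le_r].
- by rewrite mulr_ge0 ?powR_ge0 ?poiw_ge0.
- exact: poiw_ge0.
have x_ge0 : 0 <= lsum lam r - Z by move: Z_le_r; rewrite /Hplus /=; lra.
have Pr : Z - Lam lam < lsum lam r by lra.
have lsum_ge0 r' : 0 <= lsum lam r'.
  by apply: sumr_ge0 => i _; rewrite mulr_ge0 ?ler0n ?ltW.
have [s Hs le_rs] := walk_to_target th01 (P := fun r => Z - Lam lam < lsum lam r)
  (H := Hset lam Z) (w := tilted lam mu z delta) (mes := lsum lam) ell_gt0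
  (fun r => tilted_ge0 lam mu delta r z_ge0) (fun r _ => lsum_ge0 r)
  (lowering_step delta mu_gt0 z_gt0 ell_le) Pr.
exists s => //; rewrite -addrA.
apply: le_trans (ler_wpM2r (poiw_ge0 r z_ge0) (polyK _ x_ge0)) _.
rewrite -mulrA -[K * _ * _]mulrA ler_pM2l //.
apply: le_trans le_rs _; apply: ler_wpM2l; first exact: geom_kernel_ge0.
by case: Hs => _; apply: tilted_le_poiw => //; apply: ltW.
Qed.

Section Raising.
Variables (R : realType) (k : nat) (lam mu z : 'I_k -> R) (ga ell : R).
Hypotheses (lam_gt0 : forall i, 0 < lam i) (mu_gt0 : forall i, 0 < mu i)
  (z_ge1 : forall i, 1 <= z i).
Hypotheses (Lam_gt0 : 0 < Lam lam) (ell_le : forall i, ell <= lam i).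
Implicit Types (r : midx k).

Let Z := Zval mu z.
Let T := \sum_i lam i.
Let kap := \sum_i (mu i)^-1.

(* Near the shell a raising step may only have lambda_i r_i < mu_i z_i, losing a factor
   1 + lambda_i / mu_i; the drop of the capped gap, weighted by kap, pays for it. *)
Definition gap_cap r := Num.min (Zval mu z - lsum lam r) (\sum_i lam i).

Definition raised_weight r :=
  expR (- ((\sum_i (mu i)^-1) * gap_cap r)) * tilted lam mu z ga r.

Let z_gt0 i : 0 < z i. Proof. by have := z_ge1 i; lra. Qed.
Let kap_ge0 : 0 <= kap.
Proof. by apply: sumr_ge0 => i _; rewrite invr_ge0 ltW. Qed.

Lemma gap_cap_updS r i :
  gap_cap (upd r i (r i).+1) = Num.min (Z - lsum lam r - lam i) T.
Proof. by rewrite /gap_cap lsum_updS upd_id opprD addrA. Qed.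

Lemma raising_index r : lsum lam r < Z -> exists i,
  lam i * (r i).+1%:R <= mu i * z i * expR (kap * (gap_cap r - gap_cap (upd r i (r i).+1))).
Proof.
move=> lt_rZ; have mz_ge0 i : 0 <= mu i * z i by rewrite mulr_ge0 ?ltW.
have [[i le_i] | none] := pselect (exists i, lam i * (r i).+1%:R <= mu i * z i).
  exists i; apply: le_trans le_i _; rewrite -[leLHS]mulr1 ler_wpM2l // -expR0 ler_expR.
  rewrite mulr_ge0 // subr_ge0 gap_cap_updS /gap_cap le_min !ge_min lexx orbT andbT.
  by rewrite lerBlDr lerDl ltW.
have Z_le : Z - lsum lam r <= T.
  rewrite lerBlDl /Z /Zval /lsum /T -big_split /=; apply: ler_sum => i _.
  have /negP := (forallNP _).2 none i.
  by rewrite -ltNge -natr1 mulrDr mulr1 => /ltW.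
have [i lt_i] := exists_lt_of_sum_lt lt_rZ.
exists i; have kap_ge : (mu i)^-1 <= kap.
  by rewrite /kap (bigD1 i) //= lerDl sumr_ge0 // => j _; rewrite invr_ge0 ltW.
have gap_drop : lam i / mu i <= kap * (gap_cap r - gap_cap (upd r i (r i).+1)).
  have : lam i <= gap_cap r - gap_cap (upd r i (r i).+1).
    rewrite gap_cap_updS /gap_cap (min_l Z_le).
    have : Num.min (Z - lsum lam r - lam i) T <= Z - lsum lam r - lam i.
      by rewrite ge_min lexx.
    lra.
  move/(ler_wpM2l kap_ge0); apply: le_trans.
  by rewrite mulrC; apply: ler_wpM2r => //; apply: ltW.
have exp_ge : 1 + lam i / mu i <= expR (kap * (gap_cap r - gap_cap (upd r i (r i).+1))).
  by apply: le_trans (expR_ge1Dx _); rewrite lerD2l.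
apply: le_trans (ler_wpM2l (mz_ge0 i) exp_ge).
have -> : mu i * z i * (1 + lam i / mu i) = mu i * z i + lam i * z i.
  by field; rewrite gt_eqF.
rewrite -natr1 mulrDr mulr1; have := z_ge1 i; have := lam_gt0 i; nra.
Qed.

Lemma raising_step r : lsum lam r <= Z -> ~ Hset lam Z r ->
  exists i (n : nat), [/\ (`|r i - n| <= 1)%N, lsum lam (upd r i n) <= Z,
    Z - lsum lam (upd r i n) <= Z - lsum lam r - ell &
    raised_weight r
      <= expR (- (ga * lam i)) * mu i / lam i * raised_weight (upd r i n)].
Proof.
move=> le_rZ nHr; have le_r : lsum lam r <= Z - Lam lam.
  by rewrite leNgt; apply/negP => lt_r; apply: nHr; split.
have lt_rZ : lsum lam r < Z by apply: le_lt_trans le_r _; rewrite gtrDl oppr_lt0.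
have [i le_i] := raising_index lt_rZ.
have lsum_up := lsum_updS lam r i (r i); rewrite upd_id in lsum_up.
exists i, (r i).+1; split.
- by rewrite distnS.
- by rewrite lsum_up; have := lam_le_Lam lam i; lra.
- by rewrite lsum_up; have := ell_le i; lra.
set r2 := upd r i (r i).+1 in le_i lsum_up *.
have n_gt0 : 0 < (r i).+1%:R :> R by rewrite ltr0n.
have z_ge0 j : 0 <= z j by exact: ltW.
have tilt2 : tilted lam mu z ga r2
    = expR (ga * lam i) * tilted lam mu z ga r * z i / (r i).+1%:R.
  by have := tilted_updS lam mu z ga r i (r i); rewrite upd_id => <-; rewrite mulfK ?gt_eqF.
have E : expR (- (kap * gap_cap r)) * expR (kap * (gap_cap r - gap_cap r2))
    = expR (- (kap * gap_cap r2)) by rewrite -expRD; congr expR; ring.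
rewrite -(ler_pM2r (mulr_gt0 (lam_gt0 i) n_gt0)).
apply: le_trans (_ : _ <= expR (- (kap * gap_cap r)) * tilted lam mu z ga r
  * (mu i * z i * expR (kap * (gap_cap r - gap_cap r2)))) _.
  by rewrite ler_wpM2l // mulr_ge0 ?expR_ge0 ?tilted_ge0.
rewrite le_eqVlt; apply/orP; left; apply/eqP.
rewrite /raised_weight tilt2 -E expRN.
by field; rewrite !gt_eqF ?expR_gt0.
Qed.

Lemma raised_weight_ge0 r : 0 <= raised_weight r.
Proof. by rewrite mulr_ge0 ?expR_ge0 // tilted_ge0 // => i; apply: ltW. Qed.

Lemma raised_weight_le_tilted r : lsum lam r <= Z -> raised_weight r <= tilted lam mu z ga r.
Proof.
move=> le_rZ; have T_ge0 : 0 <= T by apply: sumr_ge0 => i _; apply: ltW.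
rewrite -[leRHS]mul1r; apply: ler_wpM2r; first by apply: tilted_ge0 => i; apply: ltW.
by rewrite expR_le1 oppr_le0 mulr_ge0 // le_min subr_ge0 le_rZ.
Qed.

Lemma tilted_le_raised_weight r : tilted lam mu z ga r <= expR (kap * T) * raised_weight r.
Proof.
rewrite /raised_weight mulrA -expRD -[leLHS]mul1r; apply: ler_wpM2r.
  by apply: tilted_ge0 => i; apply: ltW.
by rewrite -expR0 ler_expR subr_ge0 ler_wpM2l // ge_min lexx orbT.
Qed.
End Raising.

Lemma esum_Hminus_le_Prob_Hset (R : realType) (k : nat) (lam mu : 'I_k -> R) (C : R) :
  (0 < k)%N -> 0 <= C -> (forall i, 0 < lam i) -> (forall i, 0 < mu i) ->
  (forall i, ln (mu i / lam i) < lam i) ->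
  exists c : R, 0 < c /\
    forall z : 'I_k -> R, (forall i, 1 <= z i) -> Lam lam <= Zval mu z ->
      (esum (Hminus lam (Zval mu z))
         (fun r => ((1 + Zval mu z - lsum lam r) `^ C *
            \prod_(i < k) (expR (- z i) * (expR (lam i) * z i) ^+ r i / (r i)`!%:R))%:E)
       <= (expR (Zval mu z) * c)%:E * Prob z (Hset lam (Zval mu z)))%E.
Proof.
move=> k_gt0 C0 lam_gt0 mu_gt0 ln_lt_lam.
have slack_gt0 i : 0 < lam i - ln (mu i / lam i) by rewrite subr_gt0.
have [eta [eta_gt0 eta_le1 eta_lt]] := exists_small_pos lam slack_gt0.
have [ell [ell_gt0 _ ell_lt]] := exists_small_pos (fun _ => 1) lam_gt0.
have ell_le i : ell <= lam i by have := ell_lt i; rewrite mulr1 => /ltW.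
pose ga := 1 - eta.
pose th i := expR (- (ga * lam i)) * mu i / lam i.
have th01 i : 0 <= th i < 1.
  rewrite divr_ge0 ?mulr_ge0 ?expR_ge0 ?ltW //=.
  have lt_exp : mu i / lam i < expR (ga * lam i).
    by rewrite -[ltLHS]lnK ?posrE ?divr_gt0 // ltr_expR /ga; have := eta_lt i; lra.
  by rewrite /th -mulrA expRN [_^-1 * _]mulrC ltr_pdivrMr ?expR_gt0 // mul1r.
have [K K_gt0 polyK] := powR_le_expR C0 eta_gt0.
pose kap := \sum_i (mu i)^-1; pose T := \sum_i lam i.
exists (K * expR (kap * T) * \prod_i (2 / (1 - th i))); split.
  rewrite !mulr_gt0 ?expR_gt0 // prodr_gt0 // => i _.
  by have /andP[_ th_lt1] := th01 i; rewrite divr_gt0 // subr_gt0.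
move=> z z_ge1 Lam_le_Z; set Z := Zval mu z.
have z_ge0 i : 0 <= z i by have := z_ge1 i; lra.
have Lam_gt0 : 0 < Lam lam by apply: lt_le_trans (lam_le_Lam lam (Ordinal k_gt0)).
pose m := expR Z * (K * expR (kap * T)).
rewrite (_ : expR Z * _ = m * \prod_i (2 / (1 - th i))); last by rewrite /m !mulrA.
apply: esum_le_geom_kernel (th01) _ _ _ _ => [|r|s|r le_rZ].
- by rewrite /m !mulr_ge0 ?expR_ge0 ?ltW.
- by rewrite prod_expR_poiw !mulr_ge0 ?powR_ge0 ?expR_ge0 ?poiw_ge0.
- exact: poiw_ge0.
have gap_ge0 r' : lsum lam r' <= Z -> 0 <= Z - lsum lam r' by rewrite subr_ge0.
have [s Hs le_rs] := walk_to_target th01 (P := fun r => lsum lam r <= Z)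
  (H := Hset lam Z) (w := raised_weight lam mu z ga) (mes := fun r => Z - lsum lam r)
  ell_gt0 (raised_weight_ge0 lam mu ga z_ge1) gap_ge0
  (raising_step ga lam_gt0 mu_gt0 z_ge1 Lam_gt0 ell_le) le_rZ.
exists s => //; rewrite prod_expR_poiw -addrA.
have x_ge0 : 0 <= Z - lsum lam r by rewrite subr_ge0.
apply: le_trans (ler_wpM2r _ (polyK _ x_ge0)) _.
  by rewrite mulr_ge0 ?expR_ge0 ?poiw_ge0.
have -> : K * expR (eta * (Z - lsum lam r)) * (expR (lsum lam r) * poiw z r)
    = expR Z * K * tilted lam mu z ga r.
  have e : expR (eta * (Z - lsum lam r)) * expR (lsum lam r)
      = expR Z * expR (ga * (lsum lam r - Z)).
    by rewrite -!expRD /ga; congr expR; ring.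
  rewrite /tilted (_ : K * _ * (_ * _) = K * (expR (eta * (Z - lsum lam r))
    * expR (lsum lam r)) * poiw z r); last by ring.
  by rewrite e; ring.
rewrite /m -!mulrA ler_pM2l ?expR_gt0 // ler_pM2l //.
apply: le_trans (tilted_le_raised_weight lam ga mu_gt0 z_ge1 r) _.
rewrite ler_pM2l ?expR_gt0 //; apply: le_trans le_rs _.
apply: ler_wpM2l; first exact: geom_kernel_ge0.
case: Hs => _ le_sZ; apply: le_trans (raised_weight_le_tilted ga lam_gt0 mu_gt0 z_ge1 le_sZ) _.
by apply: tilted_le_poiw => //; rewrite subr_ge0.
Qed.

Unset Implicit Arguments.

Theorem lemma4p3 (R : realType) (k : nat) (lam mu : 'I_k -> R) (C : R) :
  (0 < k)%N -> 0 <= C ->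
  (forall i, 0 < lam i) -> (forall i, 0 < mu i) ->
  ((forall i, lam i < mu i) ->
    exists c : R, 0 < c /\
      forall z : 'I_k -> R, (forall i, 1 <= z i) -> Lam lam <= Zval mu z ->
        (esum (Hplus lam (Zval mu z))
           (fun r => ((1 + lsum lam r - Zval mu z) `^ C * poiw z r)%:E)
         <= c%:E * Prob z (Hset lam (Zval mu z)))%E)
  /\
  ((forall i, ln (mu i / lam i) < lam i) ->
    exists c : R, 0 < c /\
      forall z : 'I_k -> R, (forall i, 1 <= z i) -> Lam lam <= Zval mu z ->
        (esum (Hminus lam (Zval mu z))
           (fun r => ((1 + Zval mu z - lsum lam r) `^ C *
              \prod_(i < k) (expR (- z i) * (expR (lam i) * z i) ^+ r i / (r i)`!%:R))%:E)
         <= (expR (Zval mu z) * c)%:E * Prob z (Hset lam (Zval mu z)))%E).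
Proof.
move=> k_gt0 C0 lam_gt0 mu_gt0; split.
  exact: esum_Hplus_le_Prob_Hset.
exact: esum_Hminus_le_Prob_Hset.
Qed.
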